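(* Let $v,w\in\mathbb{R}^n$ be such that $v$ has at least one positive entry and at least one negative entry, and $w\neq 0$. Then there exists an invertible matrix $B\in\mathbb{R}^{n\times n}$ with $B\geq 0$ (entrywise) such that $Bv=w$.
   Context: For a matrix or vector, $\geq 0$ means all entries are nonnegative. *)

From HB Require Import structures.
From mathcomp Require Import all_boot all_order all_algebra.
Set Implicit Arguments. Unset Strict Implicit. Unset Printing Implicit Defensive.

From HB Require Import structures.
From mathcomp Require Import all_boot all_order all_algebra perm.
From mathcomp Require Import ring lra zify.
Import Order.TTheory GRing.Theory Num.Theory.
Set Implicit Arguments. Unset Strict Implicit. Unset Printing Implicit Defensive.
Local Open Scope ring_scope.

(* Permuting the coordinates of v and of w is harmless (permutation matrices
   are nonnegative and invertible), so we may assume v_0 > 0 > v_1 and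
   w_0 <> 0.  Since v_0 and v_1 have opposite signs, every real y is
   c_0 v_0 + c_1 v_1 for some c_0, c_1 >= 0, with one degree of freedom left
   (the slack).  Take B = [[A, 0], [C, 1]], where the rows of A and C are such
   nonnegative solutions for the targets (w_0, w_1) and w_k - v_k (k >= 2);
   as w_0 <> 0, the slacks of the two rows of A can be chosen so that
   det B = det A <> 0. *)

Lemma det_mx22 (R : comPzRingType) (A : 'M[R]_2) :
  \det A = A 0 0 * A 1 1 - A 0 1 * A 1 0.
Proof.
rewrite (expand_det_row _ 0) !big_ord_recl big_ord0 addr0 /cofactor.
rewrite !det_mx11 !mxE /= expr0 expr1 mul1r mulN1r mulrN.
by congr (A _ _ * A _ _ - A _ _ * A _ _); apply: val_inj.
Qed.

Lemma exists_slack_nonparallel (R : realFieldType) (x : 'cV[R]_2) :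
  x 0 0 != 0 -> exists t : 'I_2 -> R,
    (forall i, `|x i 0| <= t i) /\ x 0 0 * t 1 != x 1 0 * t 0.
Proof.
move=> x0_neq0; have x0_gt0 : 0 < `|x 0 0| by rewrite normr_gt0.
exists (fun i => if i == 0 then `|x 0 0| else `|x 0 0| + 2 * `|x i 0|) => /=.
split=> [i|]; first by case: eqP => [->|_] //; have := normr_ge0 (x i 0); lra.
have x1_ge0 := normr_ge0 (x 1 0).
apply/eqP => /(congr1 Num.norm); rewrite !normrM normr_id.
by rewrite (@ger0_norm _ (`|x 0 0| + 2 * `|x 1 0|)); nra.
Qed.

Section NonnegMatrices.
Variable R : realFieldType.

Definition nonneg_mx m n (A : 'M[R]_(m, n)) := forall i j, 0 <= A i j.

Definition nonneg_mapsto n (v w : 'cV[R]_n) :=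
  exists B : 'M[R]_n, [/\ B \in unitmx, nonneg_mx B & B *m v = w].

Lemma nonneg_mx_mul m n p (A : 'M[R]_(m, n)) (B : 'M[R]_(n, p)) :
  nonneg_mx A -> nonneg_mx B -> nonneg_mx (A *m B).
Proof.
by move=> A_ge0 B_ge0 i j; rewrite mxE; apply: sumr_ge0 => k _; apply: mulr_ge0.
Qed.

Lemma nonneg_perm_mx n (s : 'S_n) : nonneg_mx (perm_mx s).
Proof. by move=> i j; rewrite !mxE ler0n. Qed.

Lemma nonneg_block_mx m1 m2 n1 n2 (Aul : 'M[R]_(m1, n1)) (Aur : 'M[R]_(m1, n2))
    (Adl : 'M[R]_(m2, n1)) (Adr : 'M[R]_(m2, n2)) :
  nonneg_mx Aul -> nonneg_mx Aur -> nonneg_mx Adl -> nonneg_mx Adr ->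
  nonneg_mx (block_mx Aul Aur Adl Adr).
Proof.
move=> ul ur dl dr i j; rewrite !mxE.
by case: split => i'; rewrite !mxE; case: split.
Qed.

Lemma nonneg_mapsto_perml n (s : 'S_n) (v w : 'cV[R]_n) :
  nonneg_mapsto (row_perm s v) w -> nonneg_mapsto v w.
Proof.
case=> B [B_unit B_ge0 Bv]; exists (B *m perm_mx s); split.
- by rewrite unitmx_mul B_unit unitmx_perm.
- exact/nonneg_mx_mul/nonneg_perm_mx.
- by rewrite -mulmxA -row_permE.
Qed.

Lemma nonneg_mapsto_permr n (s : 'S_n) (v w : 'cV[R]_n) :
  nonneg_mapsto v (row_perm s w) -> nonneg_mapsto v w.
Proof.
case=> B [B_unit B_ge0 Bv]; exists (perm_mx s^-1 *m B); split.
- by rewrite unitmx_mul B_unit unitmx_perm.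
- exact/nonneg_mx_mul/B_ge0/nonneg_perm_mx.
- by rewrite -mulmxA Bv row_permE mulmxA -perm_mxM mulVg perm_mx1 mul1mx.
Qed.

Lemma exists_perm_sign_pattern n (v : 'cV[R]_n) (i0 i1 : 'I_n) :
  i0 != i1 -> (exists p, 0 < v p 0) -> (exists q, v q 0 < 0) ->
  exists s : 'S_n, 0 < row_perm s v i0 0 /\ row_perm s v i1 0 < 0.
Proof.
move=> i01 [p vp] [q vq]; pose s := tperm i0 p.
have q_i0 : s q != i0.
  apply: contraTneq vq => /(congr1 s); rewrite tpermK tpermL => ->.
  by rewrite -leNgt ltW.
exists (tperm i1 (s q) * s)%g; rewrite !mxE !permM; split.
- by rewrite (tpermD _ q_i0) 1?eq_sym // tpermL.
- by rewrite tpermL tpermK.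
Qed.

Section SolutionsWithSlack.
Variables (u : 'cV[R]_2).
Hypotheses (u0_gt0 : 0 < u 0 0) (u1_lt0 : u 1 0 < 0).

Definition slack_mx k (t : 'I_k -> R) (y : 'cV[R]_k) : 'M[R]_(k, 2) :=
  \matrix_(i, j) (if j == 0 then (t i + y i 0) / u 0 0 else t i / - u 1 0).

Lemma slack_mx_nonneg k (t : 'I_k -> R) (y : 'cV[R]_k) :
  (forall i, `|y i 0| <= t i) -> nonneg_mx (slack_mx t y).
Proof.
move=> y_le_t i j; rewrite mxE.
have t_ge0 : 0 <= t i := le_trans (normr_ge0 _) (y_le_t i).
have u1_gt0 : 0 < - u 1 0 by rewrite oppr_gt0.
case: (j == 0); apply: divr_ge0 => //; try exact: ltW.
by rewrite -[y i 0]opprK subr_ge0; case/ler_normlP: (y_le_t i).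
Qed.

Lemma mul_slack_mx k (t : 'I_k -> R) (y : 'cV[R]_k) : slack_mx t y *m u = y.
Proof.
apply/matrixP => i j; rewrite ord1 mxE !big_ord_recl big_ord0 !mxE /=.
have u0_neq0 : u 0 0 != 0 by rewrite gt_eqF.
have u1_neq0 : u 1 0 != 0 by rewrite lt_eqF.
rewrite (_ : lift 0 0 = 1); last exact: val_inj.
by rewrite invrN mulrN mulNr !divfK // addr0 addrC addKr.
Qed.

Lemma slack_mx_unit (t : 'I_2 -> R) (y : 'cV[R]_2) :
  y 0 0 * t 1 != y 1 0 * t 0 -> slack_mx t y \in unitmx.
Proof.
move=> ty; rewrite unitmxE det_mx22 !mxE /= unitfE.
have u0_neq0 : u 0 0 != 0 by rewrite gt_eqF.
have u1_neq0 : u 1 0 != 0 by rewrite lt_eqF.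
have -> : (t 0 + y 0 0) / u 0 0 * (t 1 / - u 1 0) -
    t 0 / - u 1 0 * ((t 1 + y 1 0) / u 0 0)
    = (y 0 0 * t 1 - y 1 0 * t 0) / (- (u 0 0 * u 1 0)).
  by field; rewrite u0_neq0 u1_neq0.
by apply: mulf_neq0; rewrite ?invr_eq0 ?oppr_eq0 ?subr_eq0 ?mulf_neq0.
Qed.

End SolutionsWithSlack.

Lemma nonneg_mapsto_col_mx m (v w : 'cV[R]_(2 + m)) :
  0 < v (lshift m 0) 0 -> v (lshift m 1) 0 < 0 -> w (lshift m 0) 0 != 0 ->
  nonneg_mapsto v w.
Proof.
rewrite -[v]vsubmxK -[w]vsubmxK !col_mxEu.
set u := usubmx v; set x := usubmx w; move=> u0_gt0 u1_lt0 x0_neq0.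
have [t [x_le_t tx]] := exists_slack_nonparallel x0_neq0.
pose y := dsubmx w - dsubmx v.
pose A := slack_mx u t x; pose C := slack_mx u (fun i => `|y i 0|) y.
exists (block_mx A 0 C 1%:M); split.
- by rewrite unitmxE det_lblock det1 mulr1 -unitmxE slack_mx_unit.
- apply: nonneg_block_mx; try exact: slack_mx_nonneg.
    by move=> i j; rewrite mxE.
  by move=> i j; rewrite mxE ler0n.
- by rewrite mul_block_col mul0mx addr0 mul1mx !(mul_slack_mx u0_gt0 u1_lt0) subrK.
Qed.

End NonnegMatrices.

Theorem mainTheorem2 (R : realFieldType) (n : nat) (v w : 'cV[R]_n)
  (hpos : exists i : 'I_n, 0 < v i 0)
  (hneg : exists i : 'I_n, v i 0 < 0)
  (hw : w != 0) :
  exists B : 'M[R]_n,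
    [/\ B \in unitmx, (forall i j, 0 <= B i j) & B *m v = w].
Proof.
have [k wk_neq0] : exists k, w k 0 != 0.
  apply/existsP; apply: contraNT hw => /existsPn w0.
  by apply/eqP/matrixP => i j; rewrite ord1 mxE; apply/eqP/negPn/w0.
have [m def_n] : exists m, n = (2 + m)%N.
  case: hpos hneg => p vp [q vq]; exists n.-2.
  have : p != q by apply: contraTneq vq => <-; rewrite -leNgt ltW.
  move: (ltn_ord p) (ltn_ord q); rewrite -(inj_eq val_inj) /=; lia.
subst n; pose i0 := lshift m (0 : 'I_2); pose i1 := lshift m (1 : 'I_2).
have [s [vs0 vs1]] := exists_perm_sign_pattern (isT : i0 != i1) hpos hneg.
change (nonneg_mapsto v w); apply: (nonneg_mapsto_permr (s := tperm i0 k)).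
apply: (nonneg_mapsto_perml (s := s)).
by apply: nonneg_mapsto_col_mx; rewrite // mxE tpermL.
Qed.
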